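(* Let $p$ be an odd prime. There is an isomorphism of $D_{2p}$-sets \[ \mathrm{Map}^{D_2}(D_{2p},\{a,b\})\cong *\amalg *\amalg\coprod_{i=1}^{2^{(p+1)/2}-2}D_{2p}/D_2\ \amalg\coprod_{i=1}^{\frac{2^{p-1}-1}{p}+1-2^{(p-1)/2}}D_{2p}.\]
   Context: $D_{2p}=\langle\tau,\zeta_p\mid\tau^2=\zeta_p^p=(\tau\zeta_p)^2=1\rangle$ is the dihedral group of order $2p$ and $D_2=\langle\tau\rangle$. $\{a,b\}$ is a two-element set with trivial $D_2$-action, and $\mathrm{Map}^{D_2}(D_{2p},\{a,b\})$ is the coinduced $D_{2p}$-set of $D_2$-equivariant maps $D_{2p}\to\{a,b\}$. *)

From mathcomp Require Import all_boot all_fingroup.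
Set Implicit Arguments. Unset Strict Implicit. Unset Printing Implicit Defensive.
Local Open Scope group_scope.

Section Defs.
Variable gT : finGroupType.

Definition dihedral_pres (G : {set gT}) (p : nat) (tau z : gT) : Prop :=
  [/\ G = <<[set tau; z]>>, tau ^+ 2 = 1, z ^+ p = 1,
      (tau * z) ^+ 2 = 1 & #|G| = (2 * p)%N].

(* Map^{D_2}(G, {a,b}) with {a,b} = bool (trivial D_2-action), D_2 = <[tau]>
   acting on G by left multiplication: maps f : G -> bool with f (tau x) = f x. *)
Definition coind_set (G : {set gT}) (tau : gT) : {set {ffun gT -> bool}} :=
  [set f : {ffun gT -> bool} | [forall x, (x \notin G) ==> ~~ f x]
                              && [forall x in G, f (tau * x) == f x]].

Definition coind_act (G : {set gT}) (g : gT) (f : {ffun gT -> bool})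
  : {ffun gT -> bool} := [ffun x => if x \in G then f (x * g) else false].

(* The G-set  * + * + N1 copies of G/D_2 + N2 copies of G. *)
Definition rhs_type (N1 N2 : nat) : finType :=
  (bool + ('I_N1 * {set gT}) + ('I_N2 * gT))%type.

Definition rhs_set (G : {set gT}) (tau : gT) (N1 N2 : nat) : {set rhs_type N1 N2} :=
  [set y : rhs_type N1 N2 | match y with
     | inl (inl _) => true
     | inl (inr (_, C)) => C \in lcosets <[tau]> G
     | inr (_, x) => x \in G end].

Definition rhs_act (N1 N2 : nat) (g : gT) (y : rhs_type N1 N2) : rhs_type N1 N2 :=
  match y with
  | inl (inl b) => inl (inl b)
  | inl (inr (i, C)) => inl (inr (i, g *: C))
  | inr (i, x) => inr (i, g * x) end.

End Defs.

Definition gset_iso (gT : finGroupType) (aT bT : finType) (G : {set gT})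
  (A : {set aT}) (actA : gT -> aT -> aT) (B : {set bT}) (actB : gT -> bT -> bT)
  : Prop :=
  exists phi : aT -> bT,
    [/\ {in A, forall x, phi x \in B},
        {in A &, injective phi},
        {in B, forall y, exists2 x, x \in A & phi x = y}
      & {in G, forall g, {in A, forall x, phi (actA g x) = actB g (phi x)}}].

(* View Map^{D_2}(G, {a,b}) as the functions f on G = D_{2p} with
   f (tau x) = f x; there are 2^p of them, one for each function on the
   rotations <z>.  If a nontrivial rotation fixes f then, <z> having prime
   order, all of <z> does and f is constant: these are the two fixed points.
   Otherwise the stabiliser of f meets <z> trivially, so it is trivial or
   generated by a reflection, and every reflection is conjugate to tau since
   p is odd.  As <tau> is self-normalising, each orbit of type G/<tau>
   contains exactly one f with stabiliser <tau>, i.e. one non-constant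
   tau-fixed f; such f are determined by their values on the (p+1)/2 classes
   {w, w^-1} of rotations, giving 2^((p+1)/2) - 2 such orbits.  The number N
   of free orbits then comes from 2^p = 2 + p (2^((p+1)/2) - 2) + 2p N. *)

From mathcomp Require Import all_boot all_fingroup cyclic zify.
Set Implicit Arguments. Unset Strict Implicit. Unset Printing Implicit Defensive.
Local Open Scope group_scope.

Lemma card_ffun_retract (T : finType) (D E : {set T}) (r : T -> T) :
    D \subset E -> {in E, forall x, r x \in D} -> {in D, forall x, r x = x} ->
  #|[set f : {ffun T -> bool} | [forall x, f x == (x \in E) && f (r x)]]|
    = (2 ^ #|D|)%N.
Proof.
move=> sDE rED rD.
pose S := [set f : {ffun T -> bool} | [forall x, f x == (x \in E) && f (r x)]].
have SP (f : {ffun T -> bool}) :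
    reflect (forall x, f x = (x \in E) && f (r x)) (f \in S).
  by rewrite inE; apply: (iffP forallP) => h x; apply/eqP.
pose res (f : {ffun T -> bool}) := [ffun x => (x \in D) && f x].
have res_inj : {in S &, injective res}.
  move=> f1 f2 /SP f1E /SP f2E /ffunP e; apply/ffunP => x.
  rewrite f1E f2E; case: (boolP (x \in E)) => // xE.
  by have := e (r x); rewrite !ffunE rED.
rewrite -[2]card_bool -(card_pffun_on false D predT) -(card_in_imset res_inj).
apply: eq_card => c; apply/imsetP/pffun_onP => [[f _ ->]|[suppc _]].
  split=> //; apply/subsetP => x; rewrite !inE ffunE.
  by case: (x \in D).
have cD x : c x = (x \in D) && c x.
  case: (boolP (x \in D)) => // xD; apply/negbTE; apply: contra xD => cx.
  by apply: (subsetP suppc); rewrite inE cx.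
exists [ffun x => (x \in E) && c (r x)].
  apply/SP => x; rewrite !ffunE; case: (boolP (x \in E)) => //= xE.
  by have rxD := rED x xE; rewrite (rD (r x)) // (subsetP sDE _ rxD).
apply/ffunP => x; rewrite !ffunE cD; case: (boolP (x \in D)) => // xD.
by rewrite (subsetP sDE) // rD.
Qed.

Lemma gset_iso_inverse (gT : finGroupType) (aT bT : finType) (G : {set gT})
    (A : {set aT}) (actA : gT -> aT -> aT) (B : {set bT})
    (actB : gT -> bT -> bT) (psi : bT -> aT) (y0 : bT) :
    {in G, forall g, {in B, forall y, actB g y \in B}} ->
    {in B, forall y, psi y \in A} -> {in B &, injective psi} ->
    {in A, forall x, exists2 y, y \in B & psi y = x} ->
    {in G, forall g, {in B, forall y, psi (actB g y) = actA g (psi y)}} ->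
  gset_iso G A actA B actB.
Proof.
move=> actB_in psiB psi_inj psi_onto psi_act.
pose phi x := odflt y0 [pick y in B | psi y == x].
have phiP x : x \in A -> phi x \in B /\ psi (phi x) = x.
  case/psi_onto=> y yB <-; rewrite /phi.
  by case: pickP => [y' /andP[y'B /eqP]|/(_ y)] //; rewrite yB eqxx.
have psiK : {in B, forall y, phi (psi y) = y}.
  by move=> y yB; have [? /psi_inj->] := phiP _ (psiB y yB).
exists phi; split.
- by move=> x /phiP[].
- by move=> x1 x2 /phiP[_ e1] /phiP[_ e2] e; rewrite -e1 -e2 e.
- by move=> y yB; exists (psi y); rewrite ?psiB ?psiK.
- by move=> g gG _ /psi_onto[y yB <-]; rewrite -psi_act ?psiK ?actB_in.
Qed.

Lemma card_gset_iso (gT : finGroupType) (aT bT : finType) (G : {set gT})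
    (A : {set aT}) (actA : gT -> aT -> aT) (B : {set bT})
    (actB : gT -> bT -> bT) :
  gset_iso G A actA B actB -> #|A| = #|B|.
Proof.
case=> phi [phiB phi_inj phi_onto _]; rewrite -(card_in_imset phi_inj).
apply: eq_card => y; apply/imsetP/idP => [[x xA ->]|/phi_onto[x xA <-]].
  exact: phiB.
by exists x.
Qed.

Lemma rhs_act_in (gT : finGroupType) (G : {group gT}) (tau : gT) N1 N2 :
  {in G, forall g, {in rhs_set G tau N1 N2, forall y,
    rhs_act g y \in rhs_set G tau N1 N2}}.
Proof.
move=> g gG [[b|[i C]]|[i x]]; rewrite !inE //; last exact: groupM.
case/lcosetsP=> x xG ->; apply/lcosetsP.
by exists (g * x); rewrite ?groupM ?lcosetM.
Qed.

Lemma card_rhs_set (gT : finGroupType) (G : {group gT}) (tau : gT) N1 N2 :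
  #|rhs_set G tau N1 N2| = (2 + N1 * #|G : <[tau]>| + N2 * #|G|)%N.
Proof.
rewrite -sum1_card !big_sumType /= !sum1dep_card -card_lcosets.
have -> : [set b | inl (inl b) \in rhs_set G tau N1 N2] = setT.
  by apply/setP => b; rewrite !inE.
have -> : [set iC | inl (inr iC) \in rhs_set G tau N1 N2]
          = setX setT (lcosets <[tau]> G).
  by apply/setP => -[i C]; rewrite !inE.
have -> : [set ix | inr ix \in rhs_set G tau N1 N2] = setX setT G.
  by apply/setP => -[i x]; rewrite !inE.
by rewrite !cardsX !cardsT card_bool !card_ord.
Qed.

Section OrbitDecomposition.

Variables (gT : finGroupType) (G : {group gT}) (aT : finType).
Variables (A : {set aT}) (act : gT -> aT -> aT).
Hypothesis act_in : {in G, forall g, {in A, forall x, act g x \in A}}.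
Hypothesis act1 : {in A, forall x, act 1 x = x}.
Hypothesis actM :
  {in G &, forall g h, {in A, forall x, act (g * h) x = act g (act h x)}}.

Definition stab x := [set g in G | act g x == x].
Definition orbit_of x := [set act g x | g in G].
Definition orbit_rep x := odflt x [pick y in orbit_of x].

Lemma actKV g : g \in G -> {in A, forall x, act g^-1 (act g x) = x}.
Proof. by move=> gG x xA; rewrite -actM ?groupV // mulVg act1. Qed.

Lemma act_eq g h x : g \in G -> h \in G -> x \in A ->
  (act g x == act h x) = (h^-1 * g \in stab x).
Proof.
move=> gG hG xA; rewrite inE groupM ?groupV // actM ?groupV //.
apply/eqP/eqP => [->|e]; first exact: actKV.
by rewrite -[in RHS]e -actM ?groupV ?act_in // mulgV act1 ?act_in.
Qed.

Lemma stab_act g x : g \in G -> x \in A -> stab (act g x) = stab x :^ g^-1.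
Proof.
move=> gG xA; apply/setP => h; rewrite mem_conjg invgK conjgE.
case: (boolP (h \in G)) => hG; last first.
  by rewrite !inE (negbTE hG) groupMl ?groupV // groupMr // (negbTE hG).
by rewrite [h \in _]inE hG -actM // act_eq ?groupM.
Qed.

Lemma card_stab_act g x : g \in G -> x \in A -> #|stab (act g x)| = #|stab x|.
Proof. by move=> gG xA; rewrite stab_act ?cardJg. Qed.

Lemma stab_group x : x \in A -> group_set (stab x).
Proof.
move=> xA; apply/group_setP; split=> [|g h].
  by rewrite !inE group1 act1 // eqxx.
rewrite !inE => /andP[gG /eqP gx] /andP[hG /eqP hx].
by rewrite groupM // actM // hx gx eqxx.
Qed.

Lemma orbit_of_act g x : g \in G -> x \in A -> orbit_of (act g x) = orbit_of x.
Proof.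
move=> gG xA; apply/setP => y; apply/imsetP/imsetP => [[h hG ->]|[h hG ->]].
  by exists (h * g); rewrite ?groupM ?actM.
by exists (h * g^-1); rewrite ?groupM ?groupV // actM ?groupV ?act_in // actKV.
Qed.

Lemma act_eq_act g h x y : g \in G -> h \in G -> x \in A -> y \in A ->
  act g x = act h y -> y = act (h^-1 * g) x.
Proof. by move=> gG hG xA yA e; rewrite actM ?groupV // e actKV. Qed.

Lemma orbit_of_refl x : x \in A -> x \in orbit_of x.
Proof. by move=> xA; apply/imsetP; exists 1; rewrite ?act1. Qed.

Lemma orbit_rep_act g x : g \in G -> x \in A ->
  orbit_rep (act g x) = orbit_rep x.
Proof.
move=> gG xA; rewrite /orbit_rep orbit_of_act //.
by case: pickP => // /(_ x); rewrite orbit_of_refl.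
Qed.

Lemma orbit_repP x : x \in A -> exists2 g, g \in G & orbit_rep x = act g x.
Proof.
move=> xA; rewrite /orbit_rep; case: pickP => [y /imsetP[g gG ->]|/(_ x)].
  by exists g.
by rewrite orbit_of_refl.
Qed.

Variables (t : gT) (c : bool -> aT).
Hypothesis t_in : t \in G.
Hypothesis normal_t : 'N_G(<[t]>) \subset <[t]>.
Hypotheses (order_t_gt1 : 1 < #[t]) (order_t_ltG : #[t] < #|G|).
Hypotheses (c_in : forall b, c b \in A) (c_inj : injective c).
Hypothesis stab_c : forall b, stab (c b) = G.
Hypothesis stab_cases : {in A, forall x, [\/ exists b, x = c b,
  exists2 g, g \in G & stab (act g x) = <[t]> | stab x = 1]}.

Definition tstab_points := [set x in A | stab x == <[t]>].
Definition free_reps := [set x in A | (stab x == 1) && (orbit_rep x == x)].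

Local Notation N1 := #|tstab_points|.
Local Notation N2 := #|free_reps|.

(* A coset C acts through its representative [repr C]; by
   [orbit_decomp_coset] any other element of C would do. *)
Definition orbit_decomp (y : rhs_type gT N1 N2) : aT :=
  match y with
  | inl (inl b) => c b
  | inl (inr (i, C)) => act (repr C) (enum_val i)
  | inr (i, g) => act g (enum_val i)
  end.

Lemma tstab_pointsP x : x \in tstab_points -> x \in A /\ stab x = <[t]>.
Proof. by rewrite inE => /andP[xA /eqP]. Qed.

Lemma free_repsP x :
  x \in free_reps -> [/\ x \in A, stab x = 1 & orbit_rep x = x].
Proof. by rewrite inE => /and3P[xA /eqP sx /eqP rx]. Qed.

Lemma tstab_unique g x : g \in G -> x \in A -> stab x = <[t]> ->
  stab (act g x) = <[t]> -> act g x = x.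
Proof.
move=> gG xA sx; rewrite stab_act // sx => /normP; rewrite -groupV invgK => nt.
have : g \in stab x by rewrite sx (subsetP normal_t) // inE gG.
by rewrite inE => /andP[_ /eqP].
Qed.

Lemma orbit_decomp_coset i x : x \in G ->
  orbit_decomp (inl (inr (i, x *: <[t]>))) = act x (enum_val i).
Proof.
move=> xG; have [rA sr] := tstab_pointsP (enum_valP i).
have xt_r : x^-1 * repr (x *: <[t]>) \in <[t]>.
  by rewrite -mem_lcoset; apply: mem_repr (lcoset_refl _ _).
have rG : repr (x *: <[t]>) \in G.
  by rewrite -(mulKVg x (repr _)) groupM // (subsetP _ _ xt_r) ?cycle_subG.
by apply/eqP; rewrite /= act_eq // sr.
Qed.

Lemma card_stab_decomp y : y \in rhs_set G t N1 N2 ->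
  #|stab (orbit_decomp y)| =
    match y with inl (inl _) => #|G| | inl (inr _) => #[t] | inr _ => 1%N end.
Proof.
case: y => [[b|[i C]]|[i g]]; rewrite inE.
- by rewrite stab_c.
- case/lcosetsP=> x xG ->; have [rA sr] := tstab_pointsP (enum_valP i).
  by rewrite orbit_decomp_coset // card_stab_act // sr.
- move=> gG; have [rA sr _] := free_repsP (enum_valP i).
  by rewrite card_stab_act // sr cards1.
Qed.

Lemma orbit_decomp_in y : y \in rhs_set G t N1 N2 -> orbit_decomp y \in A.
Proof.
case: y => [[b|[i C]]|[i g]]; rewrite inE.
- by move=> _; apply: c_in.
- case/lcosetsP=> x xG ->; have [rA _] := tstab_pointsP (enum_valP i).
  by rewrite orbit_decomp_coset // act_in.
- by move=> gG; have [rA _ _] := free_repsP (enum_valP i); rewrite act_in.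
Qed.

Lemma orbit_decomp_inj : {in rhs_set G t N1 N2 &, injective orbit_decomp}.
Proof.
move=> y1 y2 y1B y2B e.
(* Points of different kinds have stabilisers of orders #|G| > #[t] > 1. *)
have kind := card_stab_decomp y1B; rewrite e card_stab_decomp // in kind.
have ltG := ltn_trans order_t_gt1 order_t_ltG.
move: y1B y2B e kind.
case: y1 => [[b1|[i1 C1]]|[i1 g1]]; case: y2 => [[b2|[i2 C2]]|[i2 g2]];
  rewrite !inE => y1B y2B e kind; try lia.
- by move/c_inj: e => ->.
- move: e; case/lcosetsP: y1B => x1 x1G ->; case/lcosetsP: y2B => x2 x2G ->.
  rewrite !orbit_decomp_coset // => e.
  have [r1A sr1] := tstab_pointsP (enum_valP i1).
  have [r2A sr2] := tstab_pointsP (enum_valP i2).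
  have x12G : x2^-1 * x1 \in G by rewrite groupM ?groupV.
  have e12 := act_eq_act x1G x2G r1A r2A e.
  have /enum_val_inj ei : enum_val i2 = enum_val i1.
    by rewrite e12 tstab_unique // -e12.
  subst i2; have : x2^-1 * x1 \in stab (enum_val i1) by rewrite -act_eq ?e.
  by rewrite sr1 -mem_lcoset => /lcoset_eqP ->.
- have [r1A sr1 rep1] := free_repsP (enum_valP i1).
  have [r2A _ rep2] := free_repsP (enum_valP i2).
  have /enum_val_inj ei : enum_val i1 = enum_val i2.
    rewrite -rep1 -rep2 -(orbit_rep_act y1B r1A) -(orbit_rep_act y2B r2A).
    by rewrite /= in e; rewrite e.
  subst i2; congr (inr (_, _)); move/eqP: e.
  by rewrite act_eq // sr1 => /set1P/(canRL (mulKVg g2)); rewrite mulg1.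
Qed.

Lemma orbit_decomp_onto :
  {in A, forall x, exists2 y, y \in rhs_set G t N1 N2 & orbit_decomp y = x}.
Proof.
move=> x xA; case: (stab_cases xA) => [[b ->]|[g gG sgx]|sx].
- by exists (inl (inl b)); rewrite ?inE.
- have rT : act g x \in tstab_points by rewrite inE act_in // sgx eqxx.
  exists (inl (inr (enum_rank_in rT (act g x), g^-1 *: <[t]>))).
    by rewrite inE; apply/lcosetsP; exists g^-1; rewrite ?groupV.
  by rewrite orbit_decomp_coset ?groupV // enum_rankK_in // actKV.
- have [g gG rx] := orbit_repP xA.
  have rF : act g x \in free_reps.
    rewrite inE act_in // stab_act // sx conjs1g eqxx /=.
    by rewrite orbit_rep_act // rx.
  exists (inr (enum_rank_in rF (act g x), g^-1)); first by rewrite inE groupV.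
  by rewrite /= enum_rankK_in // actKV.
Qed.

Lemma orbit_decomp_act : {in G, forall g, {in rhs_set G t N1 N2, forall y,
  orbit_decomp (rhs_act g y) = act g (orbit_decomp y)}}.
Proof.
move=> g gG [[b|[i C]]|[i x]]; rewrite inE.
- move=> _ /=; apply/esym/eqP; rewrite -[X in _ == X](act1 (c_in b)).
  by rewrite act_eq ?group1 // stab_c invg1 mul1g.
- case/lcosetsP=> x xG ->.
  by rewrite [rhs_act _ _]/= -lcosetM !orbit_decomp_coset ?groupM // actM //
       (tstab_pointsP (enum_valP i)).1.
- move=> xG; have [rA _ _] := free_repsP (enum_valP i).
  by rewrite /= actM.
Qed.

Theorem gset_iso_orbit_decomp :
  gset_iso G A act (rhs_set G t N1 N2) (@rhs_act gT N1 N2).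
Proof.
apply: (gset_iso_inverse (inl (inl false)) (@rhs_act_in _ G t _ _)).
- exact: orbit_decomp_in.
- exact: orbit_decomp_inj.
- exact: orbit_decomp_onto.
- exact: orbit_decomp_act.
Qed.

End OrbitDecomposition.

Section Coinduced.

Variables (gT : finGroupType) (G : {group gT}) (tau : gT).
Hypothesis tau_in : tau \in G.

Local Notation A := (coind_set G tau).
Local Notation act := (coind_act G).

Lemma coind_setP (f : {ffun gT -> bool}) :
  reflect ((forall x, x \notin G -> f x = false) /\
           {in G, forall x, f (tau * x) = f x})
          (f \in A).
Proof.
rewrite inE; apply: (iffP andP) => [[/forallP f0 /forall_inP fT]|[f0 fT]].
  by split=> x => [/(implyP (f0 x))/negbTE|/fT/eqP].
split; first by apply/forallP => x; apply/implyP => /f0 ->.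
by apply/forall_inP => x /fT ->.
Qed.

Lemma coind_actE g f x : act g f x = if x \in G then f (x * g) else false.
Proof. exact: ffunE. Qed.

Lemma coind_act_in : {in G, forall g, {in A, forall f, act g f \in A}}.
Proof.
move=> g gG f /coind_setP[f0 fT]; apply/coind_setP; split=> x.
  by rewrite coind_actE => /negbTE ->.
by move=> xG; rewrite !coind_actE groupM // xG -mulgA fT ?groupM.
Qed.

Lemma coind_act1 : {in A, forall f, act 1 f = f}.
Proof.
move=> f /coind_setP[f0 _]; apply/ffunP => x; rewrite coind_actE mulg1.
by case: ifPn => // /f0 ->.
Qed.

Lemma coind_actM :
  {in G &, forall g h, {in A, forall f, act (g * h) f = act g (act h f)}}.
Proof.
move=> g h gG hG f _; apply/ffunP => x; rewrite !coind_actE.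
by case: ifP => // xG; rewrite groupM // mulgA.
Qed.

Definition coind_const b : {ffun gT -> bool} := [ffun x => (x \in G) && b].

Lemma coind_const_in b : coind_const b \in A.
Proof.
apply/coind_setP; split=> x; rewrite !ffunE; first by move/negbTE->.
by move=> xG; rewrite groupM // xG.
Qed.

Lemma coind_const_inj : injective coind_const.
Proof. by move=> b1 b2 /ffunP/(_ 1); rewrite !ffunE group1. Qed.

Lemma coind_act_const g b : g \in G -> act g (coind_const b) = coind_const b.
Proof.
move=> gG; apply/ffunP => x; rewrite coind_actE !ffunE.
by case: ifP => // xG; rewrite groupM.
Qed.

Lemma stab_coind_const b : stab G act (coind_const b) = G.
Proof.
apply/setP => g; rewrite inE; case: (boolP (g \in G)) => //= gG.
by rewrite coind_act_const ?eqxx.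
Qed.

Lemma coind_cycle_tau f t x :
  f \in A -> t \in <[tau]> -> x \in G -> f (t * x) = f x.
Proof.
case/coind_setP=> _ fT /cycleP[n ->] xG; elim: n => [|n IHn].
  by rewrite mul1g.
by rewrite expgS -mulgA fT ?IHn // groupM ?groupX.
Qed.

Lemma coind_fixed_const (H : {set gT}) f : f \in A ->
  G \subset <[tau]> * H -> H \subset stab G act f -> f = coind_const (f 1).
Proof.
move=> fA sGtH sHstab; apply/ffunP => x; rewrite ffunE.
case: (boolP (x \in G)) => [xG|]; last by case/coind_setP: fA => f0 _ /f0.
have /mulsgP[t h tT hH ->] := subsetP sGtH x xG.
have /setIdP[hG /eqP fh] := subsetP sHstab h hH.
by rewrite coind_cycle_tau // -[in RHS]fh coind_actE group1 mul1g.
Qed.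

Lemma coind_stab_full f : f \in A -> stab G act f = G -> f = coind_const (f 1).
Proof.
by move=> fA sG; apply: coind_fixed_const fA (mulG_subr _ _) _; rewrite sG.
Qed.

End Coinduced.

Section Dihedral.

Variables (p : nat) (gT : finGroupType) (G : {group gT}) (tau z : gT).
Hypotheses (p_pr : prime p) (p_odd : odd p).
Hypothesis DG : dihedral_pres G p tau z.

Let genG : G = <<[set tau; z]>> :> {set gT}. Proof. by case: DG. Qed.
Let tau2 : tau * tau = 1. Proof. by case: DG => _ + _; rewrite expg2. Qed.
Let zp : z ^+ p = 1. Proof. by case: DG. Qed.
Let tauz2 : (tau * z) ^+ 2 = 1. Proof. by case: DG. Qed.
Let cardG : #|G| = (2 * p)%N. Proof. by case: DG. Qed.

Lemma tau_in : tau \in G. Proof. by rewrite genG mem_gen // !inE eqxx. Qed.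
Lemma z_in : z \in G. Proof. by rewrite genG mem_gen // !inE eqxx orbT. Qed.

Lemma rot_in w : w \in <[z]> -> w \in G.
Proof. by apply/subsetP; rewrite cycle_subG z_in. Qed.

Lemma tauV : tau^-1 = tau. Proof. by apply/eqP; rewrite eq_invg_mul tau2. Qed.

Lemma tauKg x : tau * (tau * x) = x. Proof. by rewrite mulgA tau2 mul1g. Qed.

Lemma conj_rot_tau w : w \in <[z]> -> w ^ tau = w^-1.
Proof.
have zJ : z ^ tau = z^-1.
  apply: (mulIg z); rewrite mulVg conjgE tauV mulgA.
  by rewrite -[_ * tau * z]mulgA -expg2.
by case/cycleP=> i ->; rewrite conjXg zJ expVgn.
Qed.

Lemma rot_tau w : w \in <[z]> -> w * tau = tau * w^-1.
Proof. by move=> wz; rewrite -conj_rot_tau // conjgE tauV tauKg. Qed.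

Lemma dihedral_mulE : G :=: <[tau]> * <[z]>.
Proof.
have ntz : <[tau]> \subset 'N(<[z]>).
  rewrite cycle_subG; apply/normP.
  by rewrite -cycleJ conj_rot_tau ?cycle_id ?cycleV.
rewrite -norm_joinEl // genG; apply/eqP.
rewrite eqEsubset gen_subG subUset !sub1set join_subG !cycle_subG.
by rewrite !mem_gen ?inE ?cycle_id ?eqxx ?orbT.
Qed.

Lemma dihedral_orders : [/\ #[tau] = 2, #[z] = p & <[tau]> :&: <[z]> = 1].
Proof.
have e : (#[tau] * #[z] = 2 * p * #|<[tau]> :&: <[z]>|)%N.
  by rewrite -cardG dihedral_mulE; apply: mul_cardG.
have le_tau : #[tau] <= 2 by rewrite dvdn_leq // order_dvdn expg2 tau2.
have le_z : #[z] <= p by rewrite dvdn_leq ?prime_gt0 // order_dvdn zp.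
have p_gt1 := prime_gt1 p_pr.
have I_gt0 : 0 < #|<[tau]> :&: <[z]>|.
  by apply/card_gt0P; exists 1; rewrite group1.
have [o_tau o_z] : #[tau] = 2 /\ #[z] = p by split; nia.
have I1 : #|<[tau]> :&: <[z]>| = 1%N by nia.
by split=> //; apply/eqP; rewrite (trivg_card1 (<[tau]> :&: <[z]>)%G) /= I1.
Qed.

Lemma order_tau : #[tau] = 2. Proof. by case: dihedral_orders. Qed.
Lemma order_z : #[z] = p. Proof. by case: dihedral_orders. Qed.

Lemma tau_notin_rot : tau \notin <[z]>.
Proof.
case: dihedral_orders => _ _ /setP/(_ tau); rewrite !inE cycle_id /= => ->.
by rewrite -order_eq1 order_tau.
Qed.

Lemma cycle_tauE x : (x \in <[tau]>) = (x == 1) || (x == tau).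
Proof.
apply/cycleP/orP => [[i ->]|[]/eqP->]; [|by exists 0|by exists 1%N].
rewrite -(expg_mod i (_ : tau ^+ 2 = 1)) ?expg2 //.
have : i %% 2 < 2 by rewrite ltn_mod.
by case: (i %% 2) => [|[|]] // _; [left|right].
Qed.

Lemma rot_or_refl x : x \in G -> (x \in <[z]>) || (tau * x \in <[z]>).
Proof.
rewrite dihedral_mulE => /mulsgP[t w]; rewrite cycle_tauE => /orP[]/eqP-> wz ->.
  by rewrite mul1g wz.
by rewrite tauKg wz orbT.
Qed.

Lemma rot_expp w : w \in <[z]> -> w ^+ p = 1.
Proof. by case/cycleP=> i ->; rewrite -expgM mulnC expgM zp expg1n. Qed.

Lemma rot_half_square w : w \in <[z]> -> (w ^+ (p.+1)./2) ^+ 2 = w.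
Proof.
move=> wz; rewrite -expgM mulnC mul2n.
have -> : ((p.+1)./2).*2 = p.+1 by rewrite -[RHS]odd_double_half /= p_odd.
by rewrite expgS rot_expp // mulg1.
Qed.

Lemma refl_conj w : w \in <[z]> -> exists2 v, v \in <[z]> & tau * w = tau ^ v.
Proof.
move=> wz; exists (w ^+ (p.+1)./2); first exact: groupX.
set v := w ^+ _; have vz : v \in <[z]> by apply: groupX.
by rewrite conjgE mulgA rot_tau ?groupV // invgK -mulgA -expg2 rot_half_square.
Qed.

Lemma rot_commute_tau w : w \in <[z]> -> commute w tau -> w = 1.
Proof.
move=> wz; rewrite /commute rot_tau // => /mulgI/(congr1 (fun y => w * y)).
rewrite mulgV -expg2 => /esym w2.
by rewrite -(rot_half_square wz) -expgM mulnC expgM w2 expg1n.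
Qed.

Lemma cent_tau x : x \in G -> commute x tau -> x \in <[tau]>.
Proof.
move=> xG cx; case/orP: (rot_or_refl xG) => [xz|txz].
  by rewrite (rot_commute_tau xz cx) group1.
have : commute (tau * x) tau by apply/commute_sym/commuteM.
move/(rot_commute_tau txz)/(canRL (mulKg tau)); rewrite mulg1 tauV => ->.
exact: cycle_id.
Qed.

Lemma norm_cycle_tau : 'N_G(<[tau]>) \subset <[tau]>.
Proof.
apply/subsetP => g /setIP[gG ng]; apply: cent_tau => //.
have : tau ^ g \in <[tau]> by rewrite memJ_norm ?cycle_id.
rewrite cycle_tauE conjg_eq1 -order_eq1 order_tau /= => /eqP tJ.
by apply/commute_sym/commgP/conjg_fixP.
Qed.

Lemma index_cycle_tau : #|G : <[tau]>| = p.
Proof.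
have := Lagrange (_ : <[tau]> \subset G); rewrite cycle_subG tau_in -/#[tau].
by rewrite order_tau cardG => /(_ isT) /eqP; rewrite eqn_pmul2l // => /eqP.
Qed.

Lemma rot_generator w : w \in <[z]> -> w != 1 -> <[z]> \subset <[w]>.
Proof.
move=> wz w1; rewrite (nt_gen_prime (x := w)) -/#[z] ?order_z //.
by rewrite !inE w1.
Qed.

Local Notation A := (coind_set G tau).
Local Notation act := (coind_act G).

Definition rot_part x := if x \in <[z]> then x else tau * x.

Lemma rot_part_rot x : x \in G -> rot_part x \in <[z]>.
Proof. by rewrite /rot_part => /rot_or_refl; case: ifP. Qed.

Lemma rot_part_id w : w \in <[z]> -> rot_part w = w.
Proof. by rewrite /rot_part => ->. Qed.

Lemma rot_part_tauL x : x \in G -> rot_part (tau * x) = rot_part x.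
Proof.
move=> xG; rewrite /rot_part tauKg; case: (boolP (x \in <[z]>)) => [xz|xNz].
  suff /negbTE-> : tau * x \notin <[z]> by [].
  by apply: contra tau_notin_rot => txz; rewrite -(mulgK x tau) groupM ?groupV.
by have := rot_or_refl xG; rewrite (negbTE xNz) /= => ->.
Qed.

Lemma rot_part_tauR x : x \in G -> rot_part (x * tau) = (rot_part x)^-1.
Proof.
move=> xG; case/orP: (rot_or_refl xG) => [xz|txz].
  by rewrite rot_tau // rot_part_tauL ?rot_in ?groupV // !rot_part_id ?groupV.
rewrite -{1}(tauKg x) -mulgA rot_tau // tauKg rot_part_id ?groupV //.
by rewrite -rot_part_tauL // rot_part_id.
Qed.

Lemma coind_rot_part f x : f \in A -> f x = (x \in G) && f (rot_part x).
Proof.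
case/coind_setP=> f0 fT; case: (boolP (x \in G)) => [xG|/f0 //].
by rewrite /rot_part; case: ifP => // _; rewrite fT.
Qed.

Lemma card_coind : #|A| = (2 ^ p)%N.
Proof.
have -> : A = [set f : {ffun gT -> bool} |
                 [forall x, f x == (x \in G) && f (rot_part x)]].
  apply/setP => f; rewrite [in RHS]inE; apply/idP/forallP => [fA x|fE].
    by rewrite -coind_rot_part.
  have {}fE x : f x = (x \in G) && f (rot_part x) by apply/eqP.
  apply/coind_setP; split=> x; first by rewrite fE => /negbTE->.
  by move=> xG; rewrite fE [f x]fE groupM ?tau_in // rot_part_tauL // xG.
rewrite (@card_ffun_retract _ <[z]>) -/#[z] ?order_z //.
- by rewrite cycle_subG z_in.
- exact: rot_part_rot.
- exact: rot_part_id.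
Qed.

(* One rotation from each class {w, w^-1}. *)
Definition half_rot := [set z ^+ i | i : 'I_((p + 1) %/ 2)].

Lemma card_half_rot : #|half_rot| = ((p + 1) %/ 2)%N.
Proof.
rewrite card_imset ?card_ord // => i j /eqP.
by rewrite eq_expg_ord ?order_z ?leq_div2r; [move/eqP | lia].
Qed.

Lemma half_rot_sub : half_rot \subset <[z]>.
Proof. by apply/subsetP => _ /imsetP[i _ ->]; apply: mem_cycle. Qed.

Lemma half_rot_cover w : w \in <[z]> -> (w \in half_rot) || (w^-1 \in half_rot).
Proof.
case/cycleP=> i ->; rewrite -(expg_mod i zp).
have : i %% p < p by rewrite ltn_mod prime_gt0.
move: (i %% p) => j lt_jp; case: (ltnP j ((p + 1) %/ 2)) => [lt_jh|le_hj].
  by apply/orP; left; apply/imsetP; exists (Ordinal lt_jh).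
have lt_pjh : p - j < (p + 1) %/ 2 by lia.
apply/orP; right; apply/imsetP; exists (Ordinal lt_pjh) => //=.
by apply/eqP; rewrite eq_invg_mul -expgD subnKC ?zp // ltnW.
Qed.

Lemma half_rot_TI w : w \in half_rot -> w^-1 \in half_rot -> w = 1.
Proof.
case/imsetP=> i _ -> /imsetP[j _ e].
have : z ^+ (i + j) == 1 by rewrite expgD -e mulgV.
rewrite -order_dvdn order_z => /dvdn_leq.
have := ltn_ord i; have := ltn_ord j.
by case: (i : nat) => [|i'] //=; lia.
Qed.

Definition half_part w := if w \in half_rot then w else w^-1.

Lemma half_part_half w : w \in <[z]> -> half_part w \in half_rot.
Proof.
move=> wz; rewrite /half_part; case: ifPn => // /negbTE wNh.
by have := half_rot_cover wz; rewrite wNh.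
Qed.

Lemma half_part_id w : w \in half_rot -> half_part w = w.
Proof. by rewrite /half_part => ->. Qed.

Lemma half_partV w : w \in <[z]> -> half_part w^-1 = half_part w.
Proof.
move=> wz; rewrite /half_part invgK.
case: ifP => [wVh|wVNh]; case: ifP => [wh|wNh] //.
  by rewrite (half_rot_TI wh wVh) invg1.
by have := half_rot_cover wz; rewrite wNh wVNh.
Qed.

Definition tau_fixed := [set f in A | act tau f == f].

Lemma coind_fixed_rotV f w :
  f \in A -> act tau f = f -> w \in <[z]> -> f w^-1 = f w.
Proof.
case/coind_setP=> _ fT /ffunP/(_ w) + wz; have wG := rot_in wz.
by rewrite coind_actE wG rot_tau // fT ?groupV.
Qed.

Lemma card_tau_fixed : #|tau_fixed| = (2 ^ ((p + 1) %/ 2))%N.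
Proof.
pose r x := half_part (rot_part x).
have -> : tau_fixed = [set f : {ffun gT -> bool} |
                         [forall x, f x == (x \in G) && f (r x)]].
  apply/setP => f; rewrite [in RHS]inE; apply/idP/forallP => [|fE].
    case/setIdP=> fA /eqP fT x; rewrite coind_rot_part //.
    case: (boolP (x \in G)) => //= /rot_part_rot wz.
    by rewrite /r /half_part; case: ifP => // _; rewrite coind_fixed_rotV.
  have {}fE x : f x = (x \in G) && f (r x) by apply/eqP.
  have fA : f \in A.
    apply/coind_setP; split=> x; first by rewrite fE => /negbTE->.
    by move=> xG; rewrite fE [f x]fE groupM ?tau_in // xG /r rot_part_tauL.
  rewrite inE fA; apply/eqP/ffunP => x; rewrite coind_actE [RHS]fE.
  case: ifP => // xG; rewrite (fE (x * tau)) groupM ?tau_in //.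
  by rewrite /r rot_part_tauR // half_partV ?rot_part_rot.
rewrite (@card_ffun_retract _ half_rot) ?card_half_rot //.
- by apply/subsetP => w /(subsetP half_rot_sub)/rot_in.
- by move=> x /rot_part_rot/half_part_half.
- move=> w wh; have wz := subsetP half_rot_sub w wh.
  by rewrite /r rot_part_id ?half_part_id.
Qed.

Local Notation stabC := (stab G act).

Lemma stabC_group f : f \in A -> group_set (stabC f).
Proof. exact: (stab_group (@coind_act1 _ G tau) (@coind_actM _ G tau)). Qed.

Lemma stabC_rot f w :
  f \in A -> stabC f != G -> w \in <[z]> -> w \in stabC f -> w = 1.
Proof.
move=> fA nG wz wS; apply/eqP; apply: contraNT nG => w1.
have zS : <[z]> \subset stabC f.
  apply: subset_trans (rot_generator wz w1) _.
  by rewrite (cycle_subG w (Group (stabC_group fA))).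
rewrite (coind_fixed_const tau_in fA _ zS) ?stab_coind_const //.
by rewrite -dihedral_mulE.
Qed.

Lemma stabC_tau f :
  f \in A -> stabC f != G -> tau \in stabC f -> stabC f = <[tau]>.
Proof.
move=> fA nG tS; pose S := Group (stabC_group fA).
apply/eqP; rewrite eqEsubset (cycle_subG tau S) tS andbT.
apply/subsetP => x xS; have /setIdP[xG _] := xS.
case/orP: (rot_or_refl xG) => [xz|txz].
  by rewrite (stabC_rot fA nG xz xS) group1.
have /(stabC_rot fA nG txz) tx1 : tau * x \in S by rewrite groupM.
by rewrite -(tauKg x) tx1 mulg1 cycle_id.
Qed.

Lemma coind_stab_cases f : f \in A ->
  [\/ exists b, f = coind_const G b,
      exists2 g, g \in G & stabC (act g f) = <[tau]> | stabC f = 1].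
Proof.
move=> fA; have [sG|nG] := eqVneq (stabC f) G.
  by apply: Or31; exists (f 1); apply: (coind_stab_full tau_in fA sG).
have [s1|n1] := eqVneq (stabC f) 1; first exact: Or33.
have /trivgPn[h hS h1] : Group (stabC_group fA) :!=: 1 by [].
have /setIdP[hG _] := hS.
have /negbTE hNz : h \notin <[z]>.
  by apply: contra h1 => hz; rewrite (stabC_rot fA nG hz hS).
have := rot_or_refl hG; rewrite hNz /= => /refl_conj[v vz]; rewrite tauKg => hv.
apply: Or32; exists v; first exact: rot_in.
have vG := rot_in vz.
have sJ : stabC (act v f) = stabC f :^ v^-1.
  exact: stab_act (coind_act_in tau_in) (@coind_act1 _ G tau)
                  (@coind_actM _ G tau) _ _ vG fA.
have vfA := coind_act_in tau_in vG fA.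
apply: stabC_tau => //; rewrite sJ.
  by rewrite (can2_eq (conjsgKV v) (conjsgK v)) conjGid.
by rewrite mem_conjg invgK -hv.
Qed.

Lemma tstab_points_coind :
  tstab_points G A act tau = tau_fixed :\: [set coind_const G b | b : bool].
Proof.
apply/setP => f; apply/idP/idP => [/tstab_pointsP[fA sf]|].
  rewrite in_setD inE fA; apply/andP; split.
    apply/imsetP => -[b _ fb]; move: sf; rewrite fb stab_coind_const => GE.
    have := prime_gt1 p_pr; have := cardG.
    by rewrite GE -/#[tau] order_tau; lia.
  by have := cycle_id tau; rewrite -sf inE => /andP[].
rewrite in_setD => /andP[nc /setIdP[fA fT]]; rewrite inE fA; apply/eqP.
apply: stabC_tau => //; last by rewrite inE tau_in.
apply: contra nc => /eqP/(coind_stab_full tau_in fA) fc.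
by apply/imsetP; exists (f 1).
Qed.

Lemma card_tstab_coind :
  #|tstab_points G A act tau| = (2 ^ ((p + 1) %/ 2) - 2)%N.
Proof.
rewrite tstab_points_coind cardsD card_tau_fixed (setIidPr _).
  by rewrite card_imset ?card_bool //; apply: coind_const_inj.
apply/subsetP => _ /imsetP[b _ ->].
by rewrite inE coind_const_in ?coind_act_const ?tau_in ?eqxx.
Qed.

Lemma coind_orbit_decomp :
  gset_iso G A act
    (rhs_set G tau #|tstab_points G A act tau| #|free_reps G A act|)
    (@rhs_act gT _ _).
Proof.
have p_gt1 := prime_gt1 p_pr.
apply: (gset_iso_orbit_decomp (coind_act_in tau_in) (@coind_act1 _ G tau)
          (@coind_actM _ G tau) tau_in norm_cycle_tau).
- by rewrite order_tau.
- by rewrite order_tau cardG; lia.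
- exact: coind_const_in tau_in.
- exact: coind_const_inj.
- exact: stab_coind_const.
- exact: coind_stab_cases.
Qed.

End Dihedral.

Lemma free_orbit_count p n : odd p ->
    (2 ^ p = 2 + (2 ^ ((p + 1) %/ 2) - 2) * p + n * (2 * p))%N ->
  n = ((2 ^ (p - 1) - 1) %/ p + 1 - 2 ^ ((p - 1) %/ 2))%N.
Proof.
move=> p_odd; set k := p./2.
have p_k : p = k.*2.+1 by rewrite -[LHS]odd_double_half p_odd.
have -> : ((p + 1) %/ 2 = k.+1)%N by lia.
have -> : ((p - 1) %/ 2 = k)%N by lia.
have -> : (p - 1 = k + k)%N by lia.
rewrite [in (2 ^ p)%N]p_k expnS -addnn !expnD expnS.
have : (0 < 2 ^ k)%N by rewrite expn_gt0.
move: (2 ^ k)%N => X X_gt0 e.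
have -> : (X * X - 1 = p * (X - 1 + n))%N by nia.
rewrite mulKn ?p_k //; lia.
Qed.

Theorem lemma8p4 (p : nat) (gT : finGroupType) (G : {group gT}) (tau z : gT) :
  prime p -> odd p -> dihedral_pres G p tau z ->
  gset_iso G (coind_set G tau) (coind_act G)
    (rhs_set G tau (2 ^ ((p + 1) %/ 2) - 2)
                   ((2 ^ (p - 1) - 1) %/ p + 1 - 2 ^ ((p - 1) %/ 2)))
    (@rhs_act gT (2 ^ ((p + 1) %/ 2) - 2)
                 ((2 ^ (p - 1) - 1) %/ p + 1 - 2 ^ ((p - 1) %/ 2))).
Proof.
move=> p_pr p_odd DG; have [_ _ _ _ cardG] := DG.
have iso := coind_orbit_decomp p_pr p_odd DG.
have N1E := card_tstab_coind p_pr p_odd DG.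
have := card_gset_iso iso.
rewrite card_rhs_set (card_coind p_pr p_odd DG).
rewrite (index_cycle_tau p_pr p_odd DG) cardG N1E.
move/(free_orbit_count p_odd) => N2E.
by rewrite -N1E -N2E.
Qed.
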